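(* Let $\nu,a,b\in\mathbb{R}$ with $a+\nu>b+\nu>0$. Let $f:(b,a)\to\mathbb{R}$ be a smooth decreasing function, and suppose there is $\hat u\in(b,a)$ with $f(\hat u)=f'(\hat u)=f''(\hat u)=0$, and that $f'''(u)<0$ for all $b<u<a$. Define $q$ on $(b,a)^3$ by $$q(u_1,u_2,u_3)=\frac{1}{2\sqrt2\,\pi}\int_{-1}^1\int_{-1}^1\frac{f\big(\tfrac{1+\mu}{2}\tfrac{1+\tau}{2}u_1+\tfrac{1+\mu}{2}\tfrac{1-\tau}{2}u_2+\tfrac{1-\mu}{2}u_3\big)}{\sqrt{(1-\mu)(1-\tau^2)}}\,d\mu\,d\tau.$$ Then $$\frac{\partial^3 q}{\partial u_i\partial u_j\partial u_k}<0\quad\text{for all }i,j,k\in\{1,2,3\}.$$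
   Context: Here $f$ is the inverse function of a decreasing initial profile $u_0(x)$ with $u_0(-\infty)=a$ and $u_0(+\infty)=b$. *)

From Stdlib Require Import Reals.
From Coquelicot Require Import Coquelicot.
Open Scope R_scope.

Definition coord (u : R * R * R) (i : nat) : R :=
  match i with
  | O => fst (fst u)
  | S O => snd (fst u)
  | _ => snd u
  end.

Definition upd (u : R * R * R) (i : nat) (t : R) : R * R * R :=
  match i with
  | O => (t, snd (fst u), snd u)
  | S O => (fst (fst u), t, snd u)
  | _ => (fst (fst u), snd (fst u), t)
  end.

Definition pderiv (F : R * R * R -> R) (i : nat) (u : R * R * R) : R :=
  Derive (fun t => F (upd u i t)) (coord u i).
Definition ex_pderiv (F : R * R * R -> R) (i : nat) (u : R * R * R) : Prop :=
  ex_derive (fun t => F (upd u i t)) (coord u i).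
Definition is_pderiv (F : R * R * R -> R) (i : nat) (u : R * R * R) (l : R) : Prop :=
  is_derive (fun t => F (upd u i t)) (coord u i) l.

Definition q (f : R -> R) (u : R * R * R) : R :=
  / (2 * sqrt 2 * PI) *
  RInt_gen (fun tau : R =>
    RInt_gen (fun mu : R =>
      f ((1 + mu) / 2 * ((1 + tau) / 2) * coord u 0
         + (1 + mu) / 2 * ((1 - tau) / 2) * coord u 1
         + (1 - mu) / 2 * coord u 2)
      / sqrt ((1 - mu) * (1 - tau ^ 2)))
      (at_right (-1)) (at_left 1))
    (at_right (-1)) (at_left 1).

Definition in_box (b a : R) (u : R * R * R) : Prop :=
  b < coord u 0 < a /\ b < coord u 1 < a /\ b < coord u 2 < a.

From Stdlib Require Import Reals Lra Psatz ClassicalEpsilon Classical.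
From Coquelicot Require Import Coquelicot.
Open Scope R_scope.

(* Substituting mu = sin psi and tau = sin theta removes both endpoint singularities of q:
   dtau / sqrt (1 - tau^2) = dtheta and dmu / sqrt (1 - mu) = sqrt (1 + sin psi) dpsi.
   On the box, q is therefore 1 / (2 sqrt 2 pi) times a proper integral over the square
   [-pi/2, pi/2]^2 of f at a convex combination w_0 u_1 + w_1 u_2 + w_2 u_3, against the
   weight sqrt (1 + sin psi).  Differentiating under the integral sign, d/du_i replaces f
   by f' and multiplies the weight by w_i, so the third derivative is the integral of f'''
   against a weight that is positive inside the square, hence negative. *)

Section RealContinuity.
Context {U : UniformSpace}.
Implicit Types (f g : U -> R) (x : U).

Lemma continuous_Rplus_fun f g x :
  continuous f x -> continuous g x -> continuous (fun y => f y + g y) x.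
Proof. exact (continuous_plus f g x). Qed.

Lemma continuous_Rminus_fun f g x :
  continuous f x -> continuous g x -> continuous (fun y => f y - g y) x.
Proof. exact (continuous_minus f g x). Qed.

Lemma continuous_Rmult_fun f g x :
  continuous f x -> continuous g x -> continuous (fun y => f y * g y) x.
Proof. exact (continuous_mult f g x). Qed.

Lemma continuous_pow_fun f x n : continuous f x -> continuous (fun y => f y ^ n) x.
Proof.
  intro Hf. induction n as [| n IH]; simpl.
  - apply continuous_const.
  - exact (continuous_Rmult_fun _ _ x Hf IH).
Qed.

Lemma continuous_sin_fun f x : continuous f x -> continuous (fun y => sin (f y)) x.
Proof. intro Hf. exact (continuous_comp f sin x Hf (continuous_sin _)). Qed.

Lemma continuous_sqrt_fun f x : continuous f x -> continuous (fun y => sqrt (f y)) x.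
Proof. intro Hf. exact (continuous_comp f sqrt x Hf (continuous_sqrt _)). Qed.

End RealContinuity.

Lemma continuous_fst_at {U V : UniformSpace} (p : U * V) : continuous fst p.
Proof. destruct p; apply continuous_fst. Qed.

Lemma continuous_snd_at {U V : UniformSpace} (p : U * V) : continuous snd p.
Proof. destruct p; apply continuous_snd. Qed.

Ltac solve_continuous :=
  repeat match goal with
  | |- continuous _ _ => assumption
  | |- continuous (fun _ => _ + _) _ => apply continuous_Rplus_fun
  | |- continuous (fun _ => _ - _) _ => apply continuous_Rminus_fun
  | |- continuous (fun _ => _ * _) _ => apply continuous_Rmult_fun
  | |- continuous (fun _ => _ ^ _) _ => apply continuous_pow_fun
  | |- continuous (fun _ => sin _) _ => apply continuous_sin_fun
  | |- continuous (fun _ => sqrt _) _ => apply continuous_sqrt_fun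
  | |- continuous (fun y => fst (@?g y)) _ =>
      apply (continuous_comp g fst); [| apply continuous_fst_at]
  | |- continuous (fun y => snd (@?g y)) _ =>
      apply (continuous_comp g snd); [| apply continuous_snd_at]
  | |- continuous (fun y => y) _ => apply continuous_id
  | |- continuous (Rplus ?c) _ =>
      apply (continuous_Rplus_fun (fun _ => c) (fun y => y)); [apply continuous_const | apply continuous_id]
  | |- continuous (Rminus ?c) _ =>
      apply (continuous_Rminus_fun (fun _ => c) (fun y => y)); [apply continuous_const | apply continuous_id]
  | |- continuous (Rmult ?c) _ =>
      apply (continuous_Rmult_fun (fun _ => c) (fun y => y)); [apply continuous_const | apply continuous_id]
  | |- continuous sin _ => apply continuous_sin
  | |- continuous fst _ => apply continuous_fst_at
  | |- continuous snd _ => apply continuous_snd_at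
  | |- continuous (fun _ => _) _ => apply continuous_const
  end.

Lemma continuous_slice {U : UniformSpace} (G : U -> R -> R) x s :
  continuous (fun p : U * R => G (fst p) (snd p)) (x, s) -> continuous (G x) s.
Proof.
  intro HG.
  apply (continuous_comp_2 (fun _ : R => x) (fun s : R => s) G s
           (continuous_const _ _) (continuous_id _) HG).
Qed.

Lemma locally_uniform_on_segment {U : UniformSpace} (G : U -> R -> R) c d x0 (e : posreal) :
  (forall s, c <= s <= d -> continuous (fun p : U * R => G (fst p) (snd p)) (x0, s)) ->
  locally x0 (fun x => forall s, c <= s <= d -> Rabs (G x s - G x0 s) < e).
Proof.
  intros HG.
  assert (He2 : 0 < e / 2) by (apply Rdiv_lt_0_compat; [apply cond_pos | lra]).
  assert (Hdelta : forall s, exists delta : posreal, c <= s <= d ->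
    forall p : U * R, ball (x0, s) delta p -> Rabs (G (fst p) (snd p) - G x0 s) < e / 2).
  { intro s. destruct (classic (c <= s <= d)) as [Hs | Hs].
    - destruct (proj1 (filterlim_locally _ _) (HG s Hs) (mkposreal _ He2)) as [delta Hd].
      exists delta. intros _ p Hp. exact (Hd p Hp).
    - exists (mkposreal 1 Rlt_0_1). intro; contradiction. }
  destruct (choice _ Hdelta) as [delta Hball].
  (* [om] is a Lebesgue number of the cover of [c, d] by these balls. *)
  destruct (compactness_value_1d c d delta) as [om Hom].
  exists om. intros x Hx s Hs.
  destruct (classic (exists t, c <= t <= d /\ Rabs (s - t) < delta t /\ om <= delta t))
    as [[t [Ht [Hst Homt]]] | Hnot]; [| exfalso; exact (Hom s Hs Hnot)].
  assert (Hxs : Rabs (G x s - G x0 t) < e / 2).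
  { apply (Hball t Ht (x, s)). split; [exact (ball_le _ _ _ Homt _ Hx) | exact Hst]. }
  assert (Hx0s : Rabs (G x0 s - G x0 t) < e / 2).
  { apply (Hball t Ht (x0, s)). split; [apply ball_center | exact Hst]. }
  replace (G x s - G x0 s) with ((G x s - G x0 t) - (G x0 s - G x0 t)) by ring.
  eapply Rle_lt_trans; [apply Rabs_triang |]. rewrite Rabs_Ropp. lra.
Qed.

Lemma continuous_RInt_param {U : UniformSpace} (G : U -> R -> R) c d x0 :
  c <= d ->
  locally x0 (fun x => forall s, c <= s <= d ->
    continuous (fun p : U * R => G (fst p) (snd p)) (x, s)) ->
  continuous (fun x => RInt (G x) c d) x0.
Proof.
  intros Hcd HG.
  assert (HG0 := locally_singleton _ _ HG).
  apply (proj2 (filterlim_locally _ _)). intro eps.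
  assert (He : 0 < eps / (d - c + 1)) by (apply Rdiv_lt_0_compat; [apply cond_pos | lra]).
  generalize (filter_and _ _ HG (locally_uniform_on_segment G c d x0 (mkposreal _ He) HG0)).
  apply filter_imp. intros x [Hx Hclose].
  assert (ex_RInt_slice : forall y, (forall s, c <= s <= d ->
    continuous (fun p : U * R => G (fst p) (snd p)) (y, s)) -> ex_RInt (G y) c d).
  { intros y Hy. apply (ex_RInt_continuous (V := R_CompleteNormedModule)).
    rewrite Rmin_left, Rmax_right by exact Hcd.
    intros s Hs. exact (continuous_slice G y s (Hy s Hs)). }
  change (Rabs (RInt (G x) c d - RInt (G x0) c d) < eps).
  rewrite <- (RInt_minus (V := R_CompleteNormedModule)) by auto.
  eapply Rle_lt_trans.
  { apply (abs_RInt_le_const _ c d (eps / (d - c + 1)) Hcd).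
    - apply (ex_RInt_minus (V := R_CompleteNormedModule)); auto.
    - intros s Hs. apply Rlt_le, (Hclose s Hs). }
  simpl. apply Rlt_le_trans with (eps / (d - c + 1) * (d - c + 1)); [nra |].
  field_simplify; lra.
Qed.

Lemma sin_in_open_unit θ : -(PI/2) < θ < PI/2 -> -1 < sin θ < 1.
Proof.
  intro Hθ.
  assert (Hlo : sin (-(PI/2)) < sin θ) by (apply sin_increasing_1; lra).
  assert (Hhi : sin θ < sin (PI/2)) by (apply sin_increasing_1; lra).
  rewrite sin_neg, sin_PI2 in *. lra.
Qed.

Lemma filterlim_asin_at_right_m1 : filterlim asin (at_right (-1)) (locally (-(PI/2))).
Proof.
  apply (proj2 (filterlim_locally _ _)). intro eps.
  assert (PI1 := PI2_1).
  set (e := Rmin eps 1).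
  assert (He : 0 < e <= eps) by (split; [apply Rmin_pos; [apply cond_pos | lra] | apply Rmin_l]).
  assert (He1 : e <= 1) by apply Rmin_r.
  assert (Hs := sin_in_open_unit (-(PI/2) + e) ltac:(lra)).
  assert (Hd : 0 < sin (-(PI/2) + e) + 1) by lra.
  exists (mkposreal _ Hd). intros y Hy Hy1. change (Rabs (y - -1) < sin (-(PI/2) + e) + 1) in Hy.
  apply Rabs_lt_between in Hy.
  assert (Hasin := asin_bound_lt y ltac:(lra)).
  assert (asin y < -(PI/2) + e).
  { apply Rnot_le_lt. intro Hle.
    assert (Hle' : sin (-(PI/2) + e) <= sin (asin y)) by (apply sin_incr_1; lra).
    rewrite sin_asin in Hle' by lra. lra. }
  change (Rabs (asin y - -(PI/2)) < eps). rewrite Rabs_pos_eq; lra.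
Qed.

Lemma filterlim_asin_at_left_1 : filterlim asin (at_left 1) (locally (PI/2)).
Proof.
  apply (filterlim_ext (fun y => - asin (- y))).
  { intro y. rewrite asin_opp. ring. }
  apply (filterlim_comp _ _ _ (fun y => asin (- y)) Ropp _ (locally (-(PI/2)))).
  - apply (filterlim_comp _ _ _ Ropp asin _ (at_right (-1))).
    + replace (-1) with (- (1)) by ring. apply filterlim_Ropp_left.
    + exact filterlim_asin_at_right_m1.
  - replace (PI/2) with (- - (PI/2)) at 2 by ring. apply (filterlim_opp (-(PI/2))).
Qed.

Lemma Rmin_Rmax_in_open_interval (lo hi p q z : R) :
  lo < p < hi -> lo < q < hi -> Rmin p q <= z <= Rmax p q -> lo < z < hi.
Proof.
  intros Hp Hq [H1 H2]. split.
  - eapply Rlt_le_trans; [apply Rmin_glb_lt; [apply Hp | apply Hq] | exact H1].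
  - eapply Rle_lt_trans; [exact H2 | apply Rmax_lub_lt; [apply Hp | apply Hq]].
Qed.

Lemma is_RInt_sin_subst (g K : R -> R) x y :
  -1 < x < 1 -> -1 < y < 1 ->
  (forall z, -1 < z < 1 -> continuous g z) ->
  (forall θ, -(PI/2) < θ < PI/2 -> K θ = g (sin θ) * cos θ) ->
  is_RInt g x y (RInt K (asin x) (asin y)).
Proof.
  intros Hx Hy Hg HK.
  assert (Hax := asin_bound_lt x Hx). assert (Hay := asin_bound_lt y Hy).
  assert (Hθ : forall θ, Rmin (asin x) (asin y) <= θ <= Rmax (asin x) (asin y) ->
                 -(PI/2) < θ < PI/2).
  { intro θ. exact (Rmin_Rmax_in_open_interval _ _ _ _ θ Hax Hay). }
  assert (Hsubst : RInt (fun θ => scal (cos θ) (g (sin θ))) (asin x) (asin y)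
                   = RInt g (sin (asin x)) (sin (asin y))).
  { apply (RInt_comp g sin cos).
    - intros θ Hb. apply Hg, sin_in_open_unit, Hθ, Hb.
    - intros θ _. split; [apply is_derive_sin | apply continuous_cos]. }
  rewrite !sin_asin in Hsubst by lra.
  replace (RInt K (asin x) (asin y)) with (RInt g x y).
  - apply (RInt_correct (V := R_CompleteNormedModule)), (ex_RInt_continuous (V := R_CompleteNormedModule)).
    intros z Hz. apply Hg, (Rmin_Rmax_in_open_interval _ _ _ _ z Hx Hy Hz).
  - rewrite <- Hsubst. apply RInt_ext. intros θ Hb.
    rewrite HK by (apply Hθ; lra). apply Rmult_comm.
Qed.

Lemma at_right_m1_open_unit : at_right (-1) (fun x => -1 < x < 1).
Proof.
  exists (mkposreal 1 Rlt_0_1). intros x Hx Hx1.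
  change (Rabs (x - -1) < 1) in Hx. apply Rabs_lt_between in Hx. lra.
Qed.

Lemma at_left_1_open_unit : at_left 1 (fun y => -1 < y < 1).
Proof.
  exists (mkposreal 1 Rlt_0_1). intros y Hy Hy1.
  change (Rabs (y - 1) < 1) in Hy. apply Rabs_lt_between in Hy. lra.
Qed.

Lemma is_RInt_gen_sin_subst (g K : R -> R) :
  (forall z, -1 < z < 1 -> continuous g z) ->
  (forall θ, continuous K θ) ->
  (forall θ, -(PI/2) < θ < PI/2 -> K θ = g (sin θ) * cos θ) ->
  is_RInt_gen g (at_right (-1)) (at_left 1) (RInt K (-(PI/2)) (PI/2)).
Proof.
  intros Hg HKc HK.
  apply (filterlimi_lim_ext_loc (fun xy => RInt K (asin (fst xy)) (asin (snd xy)))).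
  { apply (Filter_prod _ _ _ _ _ at_right_m1_open_unit at_left_1_open_unit). intros x y Hx Hy.
    apply is_RInt_sin_subst; assumption. }
  assert (HI : continuous (fun z : R * R => RInt K (fst z) (snd z)) (-(PI/2), PI/2)).
  { apply (continuous_RInt (V := R_NormedModule) K _ _ (RInt K)).
    apply filter_forall. intros [p q].
    apply (RInt_correct (V := R_CompleteNormedModule)), (ex_RInt_continuous (V := R_CompleteNormedModule)).
    intros z _. apply HKc. }
  intros P HP. destruct (HI P HP) as [delta Hdelta].
  apply (Filter_prod _ _ _ (fun x => ball (-(PI/2)) delta (asin x))
                           (fun y => ball (PI/2) delta (asin y))).
  - apply filterlim_asin_at_right_m1. apply locally_ball.
  - apply filterlim_asin_at_left_1. apply locally_ball.
  - intros x y Hx Hy. apply (Hdelta (asin x, asin y)). split; assumption.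
Qed.

Lemma locally_open_interval lo hi t : lo < t < hi -> locally t (fun s => lo < s < hi).
Proof. exact (open_and _ _ (open_gt lo) (open_lt hi) t). Qed.

Lemma continuous_fix_middle (F : R -> R -> R -> R) t θ ψ :
  continuous (fun p : R * R * R => F (fst (fst p)) (snd (fst p)) (snd p)) ((t, θ), ψ) ->
  continuous (fun z : R * R => F (fst z) θ (snd z)) (t, ψ).
Proof.
  intro HF.
  apply (continuous_comp (fun z : R * R => ((fst z, θ), snd z))
           (fun p : R * R * R => F (fst (fst p)) (snd (fst p)) (snd p))); [| exact HF].
  intros P [e He]. exists e. intros [z1 z2] [H1 H2].
  apply He. split; [split; [exact H1 | apply ball_center] | exact H2].
Qed.

Lemma is_derive_RInt_param_open (f f' : R -> R -> R) lo hi c d t :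
  (forall t s, lo < t < hi -> continuous (fun z : R * R => f (fst z) (snd z)) (t, s)) ->
  (forall t s, lo < t < hi -> continuous (fun z : R * R => f' (fst z) (snd z)) (t, s)) ->
  (forall t s, lo < t < hi -> is_derive (fun t => f t s) t (f' t s)) ->
  lo < t < hi ->
  is_derive (fun t => RInt (f t) c d) t (RInt (f' t) c d).
Proof.
  intros Hf Hf' Hdf Ht.
  assert (Hloc := locally_open_interval lo hi t Ht).
  assert (Hslope : RInt (f' t) c d = RInt (fun s => Derive (fun u => f u s) t) c d).
  { apply RInt_ext. intros s _. symmetry. apply is_derive_unique, Hdf, Ht. }
  rewrite Hslope.
  apply (is_derive_RInt_param f c d t).
  - apply (filter_imp (fun s => lo < s < hi)); [| exact Hloc]. intros u Hu s _. eexists. apply Hdf, Hu.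
  - intros s _. apply (continuity_2d_pt_ext_loc f').
    + destruct Hloc as [e He]. exists e. intros u v Hu _.
      symmetry. apply is_derive_unique, Hdf, He, Hu.
    + apply continuity_2d_pt_filterlim, Hf', Ht.
  - apply (filter_imp (fun s => lo < s < hi)); [| exact Hloc]. intros u Hu.
    apply (ex_RInt_continuous (V := R_CompleteNormedModule)). intros s _.
    apply (continuous_slice f u s), Hf, Hu.
Qed.

Lemma continuous_RInt_inner (G : R -> R -> R -> R) lo hi c d t θ :
  c <= d ->
  (forall t θ ψ, lo < t < hi ->
     continuous (fun p : R * R * R => G (fst (fst p)) (snd (fst p)) (snd p)) ((t, θ), ψ)) ->
  lo < t < hi ->
  continuous (fun z : R * R => RInt (G (fst z) (snd z)) c d) (t, θ).
Proof.
  intros Hcd HG Ht.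
  apply (continuous_RInt_param (fun z : R * R => G (fst z) (snd z))); [exact Hcd |].
  assert (Hnear : locally (t, θ) (fun z : R * R => lo < fst z < hi)).
  { exact (continuous_fst_at (t, θ) _ (locally_open_interval lo hi t Ht)). }
  apply (filter_imp (fun z : R * R => lo < fst z < hi)); [| exact Hnear].
  intros [z1 z2] Hz s _. apply HG, Hz.
Qed.

Lemma is_derive_RInt2_param (F F' : R -> R -> R -> R) lo hi c d t :
  c <= d ->
  (forall t θ ψ, lo < t < hi ->
     continuous (fun p : R * R * R => F (fst (fst p)) (snd (fst p)) (snd p)) ((t, θ), ψ)) ->
  (forall t θ ψ, lo < t < hi ->
     continuous (fun p : R * R * R => F' (fst (fst p)) (snd (fst p)) (snd p)) ((t, θ), ψ)) ->
  (forall t θ ψ, lo < t < hi -> is_derive (fun t => F t θ ψ) t (F' t θ ψ)) ->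
  lo < t < hi ->
  is_derive (fun t => RInt (fun θ => RInt (F t θ) c d) c d) t
            (RInt (fun θ => RInt (F' t θ) c d) c d).
Proof.
  intros Hcd HF HF' HdF.
  apply (is_derive_RInt_param_open (fun u θ => RInt (F u θ) c d)
           (fun u θ => RInt (F' u θ) c d) lo hi).
  - intros u θ Hu. exact (continuous_RInt_inner F lo hi c d u θ Hcd HF Hu).
  - intros u θ Hu. exact (continuous_RInt_inner F' lo hi c d u θ Hcd HF' Hu).
  - intros u θ Hu.
    apply (is_derive_RInt_param_open (fun u ψ => F u θ ψ) (fun u ψ => F' u θ ψ) lo hi);
      [| | | exact Hu].
    + intros u' s Hu'. apply (continuous_fix_middle F), HF, Hu'.
    + intros u' s Hu'. apply (continuous_fix_middle F'), HF', Hu'.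
    + intros u' s Hu'. apply HdF, Hu'.
Qed.

Lemma convex3_in_interval b a x y z w0 w1 w2 :
  b < x < a -> b < y < a -> b < z < a ->
  0 <= w0 -> 0 <= w1 -> 0 <= w2 -> w0 + w1 + w2 = 1 ->
  b < w0 * x + w1 * y + w2 * z < a.
Proof. intros Hx Hy Hz [H0 | <-] [H1 | <-] [H2 | <-] Hsum; split; nra. Qed.

Definition weight (i : nat) (mu tau : R) : R :=
  match i with
  | O => (1 + mu) / 2 * ((1 + tau) / 2)
  | S O => (1 + mu) / 2 * ((1 - tau) / 2)
  | _ => (1 - mu) / 2
  end.

(* Literally the argument of f in the definition of q, so that q unfolds to integrals
   of f (qarg u mu tau). *)
Definition qarg (u : R * R * R) (mu tau : R) : R :=
  (1 + mu) / 2 * ((1 + tau) / 2) * coord u 0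
  + (1 + mu) / 2 * ((1 - tau) / 2) * coord u 1
  + (1 - mu) / 2 * coord u 2.

Lemma qarg_upd u i t mu tau :
  qarg (upd u i t) mu tau = qarg u mu tau + (t - coord u i) * weight i mu tau.
Proof. destruct u as [[x y] z]; destruct i as [| [| i]]; unfold qarg; simpl; ring. Qed.

Lemma upd_coord u i : upd u i (coord u i) = u.
Proof. destruct u as [[x y] z]; destruct i as [| [| i]]; reflexivity. Qed.

Lemma in_box_coord b a u i : in_box b a u -> b < coord u i < a.
Proof. destruct u as [[x y] z]; intros (H0 & H1 & H2); destruct i as [| [| i]]; assumption. Qed.

Lemma in_box_upd b a u i t : in_box b a u -> b < t < a -> in_box b a (upd u i t).
Proof.
  destruct u as [[x y] z]; intros (H0 & H1 & H2) Ht.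
  destruct i as [| [| i]]; repeat split; simpl in *; tauto.
Qed.

Lemma weight_pos i mu tau : -1 < mu < 1 -> -1 < tau < 1 -> 0 < weight i mu tau.
Proof.
  intros Hmu Htau.
  destruct i as [| [| i]]; simpl; try apply Rmult_lt_0_compat; lra.
Qed.

Lemma qarg_in_box b a u mu tau :
  in_box b a u -> -1 <= mu <= 1 -> -1 <= tau <= 1 -> b < qarg u mu tau < a.
Proof.
  intros (H0 & H1 & H2) Hmu Htau. unfold qarg.
  apply convex3_in_interval; try assumption; try apply Rmult_le_pos; lra.
Qed.

Definition qint (k : R -> R) (W : R -> R -> R) (u : R * R * R) : R :=
  RInt (fun θ => RInt (fun ψ => k (qarg u (sin ψ) (sin θ)) * W θ ψ) (-(PI/2)) (PI/2))
    (-(PI/2)) (PI/2).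

Definition reweight (W : R -> R -> R) (i : nat) (θ ψ : R) : R :=
  W θ ψ * weight i (sin ψ) (sin θ).

Definition jointly_continuous (W : R -> R -> R) : Prop :=
  forall p : R * R, continuous (fun z : R * R => W (fst z) (snd z)) p.

Lemma jointly_continuous_reweight W i :
  jointly_continuous W -> jointly_continuous (reweight W i).
Proof.
  intros HW p. apply continuous_Rmult_fun; [apply HW |].
  destruct i as [| [| i]]; unfold weight, Rdiv; solve_continuous.
Qed.

Lemma reweight_pos W i θ ψ :
  -(PI/2) < θ < PI/2 -> -(PI/2) < ψ < PI/2 -> 0 < W θ ψ -> 0 < reweight W i θ ψ.
Proof.
  intros Hθ Hψ HW. apply Rmult_lt_0_compat; [exact HW |].
  apply weight_pos; apply sin_in_open_unit; assumption.
Qed.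

Lemma continuous_comp_qarg {V : UniformSpace} b a (k : R -> R) u (m t : V -> R) (x : V) :
  (forall y, b < y < a -> continuous k y) -> in_box b a u ->
  continuous m x -> continuous t x -> -1 <= m x <= 1 -> -1 <= t x <= 1 ->
  continuous (fun y => k (qarg u (m y) (t y))) x.
Proof.
  intros Hk Hu Hm Ht Hmx Htx.
  apply (continuous_comp (fun y => qarg u (m y) (t y)) k).
  - unfold qarg, Rdiv. solve_continuous.
  - apply Hk, qarg_in_box; assumption.
Qed.

Section QintIntegrand.

Variables (b a : R) (k : R -> R) (W : R -> R -> R) (u : R * R * R).
Hypothesis Hk : forall x, b < x < a -> continuous k x.
Hypothesis HW : jointly_continuous W.
Hypothesis Hu : in_box b a u.

Lemma continuous_qint_integrand_upd i t θ ψ : b < t < a ->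
  continuous (fun p : R * R * R =>
    k (qarg (upd u i (fst (fst p))) (sin (snd p)) (sin (snd (fst p)))) * W (snd (fst p)) (snd p))
    ((t, θ), ψ).
Proof.
  intro Ht. apply continuous_Rmult_fun.
  - apply (continuous_comp (fun p : R * R * R =>
             qarg (upd u i (fst (fst p))) (sin (snd p)) (sin (snd (fst p)))) k).
    + eapply continuous_ext. { intro p. symmetry. apply qarg_upd. }
      destruct i as [| [| i]]; unfold qarg, weight, Rdiv; solve_continuous.
    + apply Hk, qarg_in_box; [apply in_box_upd; assumption | apply SIN_bound ..].
  - apply (continuous_comp_2 (fun p : R * R * R => snd (fst p)) snd W);
      [solve_continuous .. | apply HW].
Qed.

Lemma jointly_continuous_qint_integrand :
  jointly_continuous (fun θ ψ => k (qarg u (sin ψ) (sin θ)) * W θ ψ).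
Proof.
  intro p. apply continuous_Rmult_fun; [| apply HW].
  apply (continuous_comp_qarg b a); try assumption; try apply SIN_bound; solve_continuous.
Qed.

End QintIntegrand.

Lemma is_derive_qarg_upd u i t mu tau :
  is_derive (fun t => qarg (upd u i t) mu tau) t (weight i mu tau).
Proof.
  apply (is_derive_ext (fun t => qarg u mu tau + (t - coord u i) * weight i mu tau)).
  { intro s. symmetry. apply qarg_upd. }
  auto_derive; [exact I | ring].
Qed.

Lemma is_derive_qint_integrand_upd b a k k' u i t mu tau w :
  (forall x, b < x < a -> is_derive k x (k' x)) -> in_box b a u -> b < t < a ->
  -1 <= mu <= 1 -> -1 <= tau <= 1 ->
  is_derive (fun t => k (qarg (upd u i t) mu tau) * w) t
    (k' (qarg (upd u i t) mu tau) * (w * weight i mu tau)).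
Proof.
  intros Hk Hu Ht Hmu Htau.
  assert (Hbox : b < qarg (upd u i t) mu tau < a).
  { apply qarg_in_box; [apply in_box_upd | |]; assumption. }
  assert (Hcomp := is_derive_comp k (fun t => qarg (upd u i t) mu tau) t _ _
                     (Hk _ Hbox) (is_derive_qarg_upd u i t mu tau)).
  replace (k' (qarg (upd u i t) mu tau) * (w * weight i mu tau))
    with (scal (scal (weight i mu tau) (k' (qarg (upd u i t) mu tau))) w)
    by (unfold scal; simpl; unfold mult; simpl; ring).
  exact (is_derive_scal_l _ _ _ _ Hcomp).
Qed.

Lemma is_derive_qint b a k k' W u i :
  (forall x, b < x < a -> is_derive k x (k' x)) ->
  (forall x, b < x < a -> continuous k' x) ->
  jointly_continuous W -> in_box b a u ->
  is_derive (fun t => qint k W (upd u i t)) (coord u i) (qint k' (reweight W i) u).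
Proof.
  intros Hk Hk' HW Hu.
  assert (Hkc : forall x, b < x < a -> continuous k x).
  { intros x Hx. apply (ex_derive_continuous (K := R_AbsRing) (V := R_NormedModule)).
    eexists. apply Hk, Hx. }
  assert (HPI := PI_RGT_0).
  replace (qint k' (reweight W i) u) with (qint k' (reweight W i) (upd u i (coord u i)))
    by (rewrite upd_coord; reflexivity).
  apply (is_derive_RInt2_param
           (fun t θ ψ => k (qarg (upd u i t) (sin ψ) (sin θ)) * W θ ψ)
           (fun t θ ψ => k' (qarg (upd u i t) (sin ψ) (sin θ)) * reweight W i θ ψ)
           b a); [lra | | | | apply in_box_coord, Hu].
  - intros t θ ψ Ht. exact (continuous_qint_integrand_upd b a k W u Hkc HW Hu i t θ ψ Ht).
  - intros t θ ψ Ht.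
    exact (continuous_qint_integrand_upd b a k' _ u Hk' (jointly_continuous_reweight W i HW)
             Hu i t θ ψ Ht).
  - intros t θ ψ Ht. apply (is_derive_qint_integrand_upd b a); try assumption; apply SIN_bound.
Qed.

Lemma RInt2_lt_0 (F : R -> R -> R) c d :
  c < d -> jointly_continuous F ->
  (forall x y, c < x < d -> c < y < d -> F x y < 0) ->
  RInt (fun x => RInt (F x) c d) c d < 0.
Proof.
  intros Hcd HF Hneg.
  assert (HRInt0 : RInt (fun _ => 0) c d = 0) by (rewrite RInt_const; apply Rmult_0_r).
  rewrite <- HRInt0. apply RInt_lt; [exact Hcd | intros; apply continuous_const | |].
  - intros x _. apply (continuous_RInt_param F); [lra |].
    apply filter_forall. intros x' s _. apply HF.
  - intros x Hx. rewrite <- HRInt0. apply RInt_lt; [exact Hcd | intros; apply continuous_const | |].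
    + intros y _. exact (continuous_slice F x y (HF (x, y))).
    + intros y Hy. apply Hneg; assumption.
Qed.

Lemma qint_lt_0 b a k W u :
  (forall x, b < x < a -> k x < 0) -> (forall x, b < x < a -> continuous k x) ->
  jointly_continuous W ->
  (forall θ ψ, -(PI/2) < θ < PI/2 -> -(PI/2) < ψ < PI/2 -> 0 < W θ ψ) ->
  in_box b a u -> qint k W u < 0.
Proof.
  intros Hneg Hk HW Hpos Hu. assert (HPI := PI_RGT_0).
  apply RInt2_lt_0; [lra | apply (jointly_continuous_qint_integrand b a); assumption |].
  intros θ ψ Hθ Hψ.
  assert (k (qarg u (sin ψ) (sin θ)) < 0).
  { apply Hneg, qarg_in_box; [assumption | apply SIN_bound ..]. }
  assert (0 < W θ ψ) by (apply Hpos; assumption).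
  nra.
Qed.

Lemma cos_eq_sqrt_factors θ :
  -(PI/2) < θ < PI/2 -> cos θ = sqrt (1 - sin θ) * sqrt (1 + sin θ).
Proof.
  intro Hθ. assert (Hs := sin_in_open_unit θ Hθ).
  rewrite <- sqrt_mult by lra.
  replace ((1 - sin θ) * (1 + sin θ)) with (cos θ ^ 2)
    by (assert (H := sin2_cos2 θ); unfold Rsqr in H; nra).
  rewrite sqrt_pow2; [reflexivity | apply Rlt_le, cos_gt_0; apply Hθ].
Qed.

Definition qweight (θ ψ : R) : R := sqrt (1 + sin ψ).

Lemma jointly_continuous_qweight : jointly_continuous qweight.
Proof. intro p. unfold qweight. solve_continuous. Qed.

Section QAsProperIntegral.

Variables (b a : R) (f : R -> R) (u : R * R * R).
Hypothesis Hf : forall x, b < x < a -> continuous f x.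
Hypothesis Hu : in_box b a u.

Definition qinner (tau : R) : R :=
  RInt (fun ψ => f (qarg u (sin ψ) tau) * sqrt (1 + sin ψ)) (-(PI/2)) (PI/2).

Lemma continuous_qinner_integrand tau ψ : -1 <= tau <= 1 ->
  continuous (fun z : R * R => f (qarg u (sin (snd z)) (fst z)) * sqrt (1 + sin (snd z))) (tau, ψ).
Proof.
  intro Htau. apply continuous_Rmult_fun; [| solve_continuous].
  apply (continuous_comp_qarg b a); try assumption; try apply SIN_bound; solve_continuous.
Qed.

Lemma is_RInt_gen_qinner tau : -1 < tau < 1 ->
  is_RInt_gen (fun mu => f (qarg u mu tau) / sqrt ((1 - mu) * (1 - tau ^ 2)))
    (at_right (-1)) (at_left 1) (qinner tau / sqrt (1 - tau ^ 2)).
Proof.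
  intro Htau.
  assert (Hcont : forall ψ, continuous (fun ψ => f (qarg u (sin ψ) tau) * sqrt (1 + sin ψ)) ψ).
  { intro ψ. apply (continuous_slice (fun tau ψ => f (qarg u (sin ψ) tau) * sqrt (1 + sin ψ))).
    apply continuous_qinner_integrand. lra. }
  replace (qinner tau / sqrt (1 - tau ^ 2)) with
    (RInt (fun ψ => / sqrt (1 - tau ^ 2) * (f (qarg u (sin ψ) tau) * sqrt (1 + sin ψ)))
       (-(PI/2)) (PI/2)).
  - apply is_RInt_gen_sin_subst.
    + intros mu Hmu. unfold Rdiv. apply continuous_Rmult_fun.
      * apply (continuous_comp_qarg b a); try assumption; try lra; solve_continuous.
      * apply continuous_Rinv_comp; [solve_continuous |].
        apply Rgt_not_eq, sqrt_lt_R0, Rmult_lt_0_compat; nra.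
    + intro ψ. apply continuous_Rmult_fun; [solve_continuous | apply Hcont].
    + intros ψ Hψ. assert (Hs := sin_in_open_unit ψ Hψ).
      rewrite (cos_eq_sqrt_factors ψ Hψ), sqrt_mult by nra.
      assert (0 < sqrt (1 - sin ψ)) by (apply sqrt_lt_R0; lra).
      assert (0 < sqrt (1 - tau ^ 2)) by (apply sqrt_lt_R0; nra).
      field. split; lra.
  - unfold qinner. rewrite (RInt_scal (V := R_CompleteNormedModule)).
    + unfold scal; simpl; unfold mult; simpl. unfold Rdiv. apply Rmult_comm.
    + apply (ex_RInt_continuous (V := R_CompleteNormedModule)). intros; apply Hcont.
Qed.

Lemma continuous_qinner tau : -1 < tau < 1 -> continuous qinner tau.
Proof.
  intro Htau. assert (HPI := PI_RGT_0).
  apply (continuous_RInt_param (fun tau ψ => f (qarg u (sin ψ) tau) * sqrt (1 + sin ψ))); [lra |].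
  apply (filter_imp (fun tau => -1 < tau < 1)); [| apply locally_open_interval, Htau].
  intros tau' Htau' ψ _. apply continuous_qinner_integrand. lra.
Qed.

Lemma continuous_qinner_sin θ : continuous (fun θ => qinner (sin θ)) θ.
Proof.
  assert (HPI := PI_RGT_0).
  apply (continuous_RInt_param (fun θ ψ => f (qarg u (sin ψ) (sin θ)) * qweight θ ψ)); [lra |].
  apply filter_forall. intros θ' ψ _.
  exact (jointly_continuous_qint_integrand b a f qweight u Hf jointly_continuous_qweight Hu _).
Qed.

Lemma q_eq_qint : q f u = / (2 * sqrt 2 * PI) * qint f qweight u.
Proof.
  unfold q. f_equal.
  change (RInt_gen (fun tau => RInt_gen (fun mu => f (qarg u mu tau) / sqrt ((1 - mu) * (1 - tau ^ 2)))
            (at_right (-1)) (at_left 1)) (at_right (-1)) (at_left 1)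
          = RInt (fun θ => qinner (sin θ)) (-(PI/2)) (PI/2)).
  apply is_RInt_gen_unique.
  apply (is_RInt_gen_ext (fun tau => qinner tau / sqrt (1 - tau ^ 2))).
  - apply (Filter_prod _ _ _ _ _ at_right_m1_open_unit at_left_1_open_unit).
    intros x y Hx Hy tau Htau. symmetry. apply is_RInt_gen_unique, is_RInt_gen_qinner.
    apply (Rmin_Rmax_in_open_interval _ _ x y); [assumption .. | simpl in Htau; lra].
  - apply is_RInt_gen_sin_subst; [| exact continuous_qinner_sin |].
    + intros tau Htau. unfold Rdiv. apply continuous_Rmult_fun; [apply continuous_qinner, Htau |].
      apply continuous_Rinv_comp; [solve_continuous | apply Rgt_not_eq, sqrt_lt_R0; cbv beta; nra].
    + intros θ Hθ. assert (Hs := sin_in_open_unit θ Hθ).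
      rewrite (cos_eq_sqrt_factors θ Hθ), <- sqrt_mult by lra.
      replace ((1 - sin θ) * (1 + sin θ)) with (1 - sin θ ^ 2) by ring.
      assert (0 < sqrt (1 - sin θ ^ 2)) by (apply sqrt_lt_R0; nra).
      field. lra.
Qed.

End QAsProperIntegral.

Section PartialDerivatives.

Variables (b a C : R) (G : R * R * R -> R) (k k' : R -> R) (W : R -> R -> R) (i : nat).
Hypothesis Hk : forall x, b < x < a -> is_derive k x (k' x).
Hypothesis Hk' : forall x, b < x < a -> continuous k' x.
Hypothesis HW : jointly_continuous W.
Hypothesis HG : forall v, in_box b a v -> G v = C * qint k W v.

Lemma is_pderiv_qint u : in_box b a u -> is_pderiv G i u (C * qint k' (reweight W i) u).
Proof.
  intro Hu. unfold is_pderiv.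
  apply (is_derive_ext_loc (fun t => C * qint k W (upd u i t))).
  - apply (filter_imp (fun t => b < t < a)); [| apply locally_open_interval, in_box_coord, Hu].
    intros t Ht. symmetry. apply HG, in_box_upd; assumption.
  - apply is_derive_scal, (is_derive_qint b a); assumption.
Qed.

Lemma pderiv_qint u : in_box b a u -> pderiv G i u = C * qint k' (reweight W i) u.
Proof. intro Hu. apply is_derive_unique, is_pderiv_qint, Hu. Qed.

End PartialDerivatives.

(* Only the smoothness of f and the sign of its third derivative enter the proof. *)
Theorem lemma5p3 (nu a b : R) (f : R -> R)
  (Hab : a + nu > b + nu) (Hb : b + nu > 0)
  (Hsmooth : forall (n : nat) (x : R), b < x < a -> ex_derive_n f n x)
  (Hdecr : forall x y : R, b < x -> x < y -> y < a -> f y < f x)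
  (uh : R) (Huh : b < uh < a)
  (Hf0 : f uh = 0) (Hf1 : Derive f uh = 0) (Hf2 : Derive_n f 2 uh = 0)
  (Hf3 : forall x : R, b < x < a -> Derive_n f 3 x < 0) :
  forall (i j k : nat), (i < 3)%nat -> (j < 3)%nat -> (k < 3)%nat ->
  forall u : R * R * R, in_box b a u ->
    ex_pderiv (q f) i u /\
    ex_pderiv (pderiv (q f) i) j u /\
    exists l : R, is_pderiv (pderiv (pderiv (q f) i) j) k u l /\ l < 0.
Proof.
  intros i j k _ _ _ u Hu.
  assert (HD : forall n x, b < x < a -> is_derive (Derive_n f n) x (Derive_n f (S n) x)).
  { intros n x Hx. apply Derive_correct, (Hsmooth (S n) x Hx). }
  assert (HDc : forall n x, b < x < a -> continuous (Derive_n f n) x).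
  { intros n x Hx. apply (ex_derive_continuous (K := R_AbsRing) (V := R_NormedModule)).
    exact (Hsmooth (S n) x Hx). }
  set (C := / (2 * sqrt 2 * PI)).
  assert (HW0 := jointly_continuous_qweight).
  assert (HW1 := jointly_continuous_reweight qweight i HW0).
  assert (HW2 := jointly_continuous_reweight _ j HW1).
  assert (E0 : forall v, in_box b a v -> q f v = C * qint (Derive_n f 0) qweight v).
  { intros v Hv. exact (q_eq_qint b a f v (HDc 0%nat) Hv). }
  assert (E1 := pderiv_qint b a C _ _ _ _ i (HD 0%nat) (HDc 1%nat) HW0 E0).
  assert (E2 := pderiv_qint b a C _ _ _ _ j (HD 1%nat) (HDc 2%nat) HW1 E1).
  split; [| split]; eexists.
  - exact (is_pderiv_qint b a C _ _ _ _ i (HD 0%nat) (HDc 1%nat) HW0 E0 u Hu).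
  - exact (is_pderiv_qint b a C _ _ _ _ j (HD 1%nat) (HDc 2%nat) HW1 E1 u Hu).
  - split; [exact (is_pderiv_qint b a C _ _ _ _ k (HD 2%nat) (HDc 3%nat) HW2 E2 u Hu) |].
    assert (HC : 0 < C).
    { assert (HPI := PI_RGT_0). assert (Hs := sqrt_lt_R0 2 ltac:(lra)).
      apply Rinv_0_lt_compat, Rmult_lt_0_compat; [apply Rmult_lt_0_compat |]; lra. }
    assert (Hneg : qint (Derive_n f 3) (reweight (reweight (reweight qweight i) j) k) u < 0).
    { apply (qint_lt_0 b a); [exact Hf3 | exact (HDc 3%nat) | | | exact Hu].
      - exact (jointly_continuous_reweight _ k HW2).
      - intros θ ψ Hθ Hψ. repeat apply reweight_pos; try assumption.
        apply sqrt_lt_R0. assert (Hs := sin_in_open_unit ψ Hψ). lra. }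
    nra.
Qed.
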